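(* Let $A,C\in\mathbb{C}^{n\times n}$ be Hermitian positive semidefinite, let $B\in\mathbb{C}^{n\times n}$ be invertible, and let $H=\begin{bmatrix} A & B\\ B^* & -C\end{bmatrix}$. Set \[ \alpha=\sup_{x\neq 0}\frac{x^*Ax}{x^*\sqrt{BB^*}x},\qquad \gamma=\sup_{x\neq 0}\frac{x^*Cx}{x^*\sqrt{B^*B}x}. \] Then $H$ is invertible and \[ \|H^{-1}\|\le \|B^{-1}\|\bigl(1+\max\{\alpha,\gamma\}+\alpha\gamma\bigr). \]
   Context: $\|\cdot\|$ is the spectral norm and $\sqrt{X}$ the positive semidefinite square root of a positive semidefinite matrix $X$. *)

From HB Require Import structures.
From mathcomp Require Import all_boot all_order all_algebra.
From mathcomp Require Import all_classical all_reals.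
From mathcomp Require Import complex.
Set Implicit Arguments. Unset Strict Implicit. Unset Printing Implicit Defensive.
Import Order.TTheory GRing.Theory Num.Theory.
Local Open Scope ring_scope.
Local Open Scope classical_set_scope.

Definition ctmx (R : rcfType) m n (M : 'M[R[i]]_(m, n)) : 'M[R[i]]_(n, m) :=
  (map_mx Num.conj M)^T.

Definition hpsd (R : rcfType) n (M : 'M[R[i]]_n) : Prop :=
  ctmx M = M /\ forall x : 'cV[R[i]]_n, 0 <= (ctmx x *m M *m x) 0 0.

(* the positive semidefinite square root of a PSD matrix X
   (the unique hpsd S with S * S = X) *)
Definition psd_sqrt (R : rcfType) n (X : 'M[R[i]]_n) : 'M[R[i]]_n :=
  xget 0 [set S | hpsd S /\ S *m S = X].

Definition qform (R : rcfType) n (M : 'M[R[i]]_n) (x : 'cV[R[i]]_n) : R :=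
  complex.Re ((ctmx x *m M *m x) 0 0).

Definition vnorm (R : rcfType) n (x : 'cV[R[i]]_n) : R :=
  Num.sqrt (complex.Re ((ctmx x *m x) 0 0)).

Definition specnorm (R : realType) m n (M : 'M[R[i]]_(m, n)) : R :=
  sup [set r : R | exists x : 'cV[R[i]]_n, x != 0 /\ r = vnorm (M *m x) / vnorm x].

Definition rayleigh_sup (R : realType) n (M S : 'M[R[i]]_n) : R :=
  sup [set r : R | exists x : 'cV[R[i]]_n, x != 0 /\ r = qform M x / qform S x].

From HB Require Import structures.
From mathcomp Require Import all_boot all_order all_algebra.
From mathcomp Require Import all_classical all_reals.
From mathcomp Require Import complex.
From mathcomp Require Import ring lra.
Import Order.TTheory GRing.Theory Num.Theory.
Local Open Scope ring_scope.
Set Implicit Arguments. Unset Strict Implicit. Unset Printing Implicit Defensive.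

(* Let S = sqrt(B B^* ) and T = sqrt(B^* B), so that B = S U with U unitary,
   T = U^* S U, and every eigenvalue of S and T is at least 1 / ||B^-1||.
   If H (x; y) = (u; v), i.e. u = A x + B y and v = B^* x - C y, then
   x = B^-* (v + C y) and y = B^-1 (u - A x); in the weighted norms |x|_S,
   |y|_T, |u|_(S^-1), |v|_(T^-1) the triangle inequality gives
   |x|_S <= |v|_(T^-1) + sqrt gamma |y|_C and |y|_T <= |u|_(S^-1) + sqrt alpha |x|_A,
   while pairing the two equations gives the energy identity
   x^* A x + y^* C y = Re (y^* C B^-1 u + x^* A B^-* v), bounded by Cauchy-Schwarz.
   A two-dimensional Cauchy-Schwarz argument combines these into
   |x|_S^2 + |y|_T^2 <= (1 + max(alpha, gamma))^2 (|u|_(S^-1)^2 + |v|_(T^-1)^2),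
   and the comparison of weighted and Euclidean norms costs a factor ||B^-1||.
   This yields the sharper bound ||H^-1|| <= ||B^-1|| (1 + max(alpha, gamma)). *)

Section Adjoint.
Variable R : rcfType.
Local Notation C := R[i].

Lemma ctmxK m n (M : 'M[C]_(m, n)) : ctmx (ctmx M) = M.
Proof. by apply/matrixP=> i j; rewrite !mxE conjCK. Qed.

Lemma ctmx_mul m n p (M : 'M[C]_(m, n)) (N : 'M[C]_(n, p)) :
  ctmx (M *m N) = ctmx N *m ctmx M.
Proof. by rewrite /ctmx map_mxM trmx_mul. Qed.

Lemma ctmxD m n (M N : 'M[C]_(m, n)) : ctmx (M + N) = ctmx M + ctmx N.
Proof. by apply/matrixP=> i j; rewrite !mxE rmorphD. Qed.

Lemma ctmxN m n (M : 'M[C]_(m, n)) : ctmx (- M) = - ctmx M.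
Proof. by apply/matrixP=> i j; rewrite !mxE rmorphN. Qed.

Lemma ctmx1 n : ctmx (1%:M : 'M[C]_n) = 1%:M.
Proof. by rewrite /ctmx map_mx1 trmx1. Qed.

Lemma ctmx_col m1 m2 (x : 'M[C]_(m1, 1)) (y : 'M[C]_(m2, 1)) :
  ctmx (col_mx x y) = row_mx (ctmx x) (ctmx y).
Proof. by rewrite /ctmx map_col_mx tr_col_mx. Qed.

Lemma ctmx_unit n (M : 'M[C]_n) : (ctmx M \in unitmx) = (M \in unitmx).
Proof. by rewrite /ctmx unitmx_tr map_unitmx. Qed.

Lemma ctmx_inv n (M : 'M[C]_n) : ctmx (invmx M) = invmx (ctmx M).
Proof. by rewrite /ctmx map_invmx trmx_inv. Qed.

Lemma unitary_conjM n (U X Y : 'M[C]_n) : U *m ctmx U = 1%:M ->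
  ctmx U *m X *m U *m (ctmx U *m Y *m U) = ctmx U *m (X *m Y) *m U.
Proof. by move=> UU; rewrite -!mulmxA (mulmxA U) UU mul1mx. Qed.

End Adjoint.

Section InnerProduct.
Variable R : rcfType.
Local Notation C := R[i].

Definition rdot n (a b : 'cV[C]_n) : R := complex.Re ((ctmx a *m b) 0 0).

Lemma ctmx_mulmxE n (a b : 'cV[C]_n) : (ctmx a *m b) 0 0 = \sum_i (a i 0)^* * b i 0.
Proof. by rewrite mxE; apply: eq_bigr => i _; rewrite !mxE. Qed.

Lemma ctmx_mulmx_ge0 n (a : 'cV[C]_n) : 0 <= (ctmx a *m a) 0 0.
Proof. by rewrite ctmx_mulmxE sumr_ge0 // => i _; rewrite mulrC mul_conjC_ge0. Qed.

Lemma ctmx_mulmx_eq0 n (a : 'cV[C]_n) : (ctmx a *m a) 0 0 = 0 -> a = 0.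
Proof.
rewrite ctmx_mulmxE => /eqP; rewrite psumr_eq0 => [/allP a0|i _]; last first.
  by rewrite mulrC mul_conjC_ge0.
apply/matrixP=> i j; rewrite ord1 mxE.
by have := a0 i (mem_index_enum _); rewrite mulrC mul_conjC_eq0 => /eqP.
Qed.

Lemma ReD (z w : C) : complex.Re (z + w) = complex.Re z + complex.Re w.
Proof. by case: z; case: w. Qed.

Lemma ReN (z : C) : complex.Re (- z) = - complex.Re z.
Proof. by case: z. Qed.

Lemma ReJ (z : C) : complex.Re z^* = complex.Re z.
Proof. by case: z. Qed.

Lemma Re_realM (t : R) (z : C) : complex.Re ((t%:C)%C * z) = t * complex.Re z.
Proof. by case: z => a b /=; rewrite mul0r subr0. Qed.

Lemma Re_ge0 (z : C) : 0 <= z -> 0 <= complex.Re z.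
Proof. by rewrite lecE => /andP[]. Qed.

Lemma rdotC n (a b : 'cV[C]_n) : rdot a b = rdot b a.
Proof.
rewrite /rdot !ctmx_mulmxE -ReJ rmorph_sum; congr complex.Re.
by apply: eq_bigr => i _; rewrite rmorphM /= conjCK mulrC.
Qed.

Lemma rdotDr n (a b c : 'cV[C]_n) : rdot a (b + c) = rdot a b + rdot a c.
Proof. by rewrite /rdot mulmxDr mxE ReD. Qed.

Lemma rdotDl n (a b c : 'cV[C]_n) : rdot (a + b) c = rdot a c + rdot b c.
Proof. by rewrite rdotC rdotDr !(rdotC c). Qed.

Lemma rdotNr n (a b : 'cV[C]_n) : rdot a (- b) = - rdot a b.
Proof. by rewrite /rdot mulmxN mxE ReN. Qed.

Lemma rdotNl n (a b : 'cV[C]_n) : rdot (- a) b = - rdot a b.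
Proof. by rewrite rdotC rdotNr rdotC. Qed.

Lemma rdotZr n (t : R) (a b : 'cV[C]_n) : rdot a ((t%:C)%C *: b) = t * rdot a b.
Proof. by rewrite /rdot -scalemxAr mxE Re_realM. Qed.

Lemma rdotZl n (t : R) (a b : 'cV[C]_n) : rdot ((t%:C)%C *: a) b = t * rdot a b.
Proof. by rewrite rdotC rdotZr rdotC. Qed.

Lemma rdot0r n (a : 'cV[C]_n) : rdot a 0 = 0.
Proof. by rewrite /rdot mulmx0 mxE. Qed.

Lemma rdot_mull n (M : 'M[C]_n) (a b : 'cV[C]_n) : rdot (M *m a) b = rdot a (ctmx M *m b).
Proof. by rewrite /rdot ctmx_mul mulmxA. Qed.

Lemma rdot_mulr n (M : 'M[C]_n) (a b : 'cV[C]_n) : rdot a (M *m b) = rdot (ctmx M *m a) b.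
Proof. by rewrite rdot_mull ctmxK. Qed.

Lemma rdot_col m1 m2 (x u : 'cV[C]_m1) (y v : 'cV[C]_m2) :
  rdot (col_mx x y) (col_mx u v) = rdot x u + rdot y v.
Proof. by rewrite /rdot ctmx_col mul_row_col mxE ReD. Qed.

Lemma rdot_ge0 n (a : 'cV[C]_n) : 0 <= rdot a a.
Proof. exact/Re_ge0/ctmx_mulmx_ge0. Qed.

Lemma rdot_eq0 n (a : 'cV[C]_n) : rdot a a = 0 -> a = 0.
Proof.
move=> a0; apply: ctmx_mulmx_eq0; move: (ctmx_mulmx_ge0 a) a0.
by rewrite /rdot; case: (_ 0 0) => r s /ger0_Im /= -> ->.
Qed.

Lemma qformE n (M : 'M[C]_n) (x : 'cV[C]_n) : qform M x = rdot x (M *m x).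
Proof. by rewrite /qform /rdot mulmxA. Qed.

Lemma qformN n (M : 'M[C]_n) (x : 'cV[C]_n) : qform M (- x) = qform M x.
Proof. by rewrite !qformE mulmxN rdotNl rdotNr opprK. Qed.

Lemma qform_mulmx n (M S : 'M[C]_n) (x : 'cV[C]_n) :
  qform S (M *m x) = qform (ctmx M *m S *m M) x.
Proof. by rewrite !qformE rdot_mull !mulmxA. Qed.

Lemma vnorm_sqr n (x : 'cV[C]_n) : vnorm x ^+ 2 = rdot x x.
Proof. by rewrite sqr_sqrtr ?rdot_ge0. Qed.

Lemma vnorm0 n : vnorm (0 : 'cV[C]_n) = 0.
Proof. by rewrite /vnorm mulmx0 mxE sqrtr0. Qed.

Lemma vnorm_col m1 m2 (x : 'cV[C]_m1) (y : 'cV[C]_m2) :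
  vnorm (col_mx x y) ^+ 2 = vnorm x ^+ 2 + vnorm y ^+ 2.
Proof. by rewrite !vnorm_sqr rdot_col. Qed.

Lemma vnorm_ge0 n (x : 'cV[C]_n) : 0 <= vnorm x.
Proof. exact: sqrtr_ge0. Qed.

Lemma vnorm_unitary n (U : 'M[C]_n) (x : 'cV[C]_n) :
  ctmx U *m U = 1%:M -> vnorm (U *m x) = vnorm x.
Proof. by move=> UU; rewrite /vnorm -/(rdot _ _) rdot_mull mulmxA UU mul1mx. Qed.

Lemma vnorm_gt0 n (x : 'cV[C]_n) : x != 0 -> 0 < vnorm x.
Proof.
move=> x0; rewrite sqrtr_gt0 lt_def rdot_ge0 andbT.
by apply: contra x0 => /eqP/rdot_eq0->.
Qed.

Lemma ctmx_mulmx_le m n (M : 'M[C]_(m, n)) (x : 'cV[C]_n) :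
  (ctmx (M *m x) *m (M *m x)) 0 0 <= (\sum_i (\sum_j `|M i j|) ^+ 2) * (ctmx x *m x) 0 0.
Proof.
set N := (ctmx x *m x) 0 0; have N0 : 0 <= N := ctmx_mulmx_ge0 x.
have x_le j : `|x j 0| <= sqrtC N.
  rewrite -[`|x j 0|]sqrCK ?normr_ge0 // ler_sqrtC ?nnegrE ?exprn_ge0 ?normr_ge0 //.
  rewrite normCK /N ctmx_mulmxE (bigD1 j) //= mulrC lerDl sumr_ge0 // => k _.
  by rewrite mulrC mul_conjC_ge0.
have Mx_le i : `|(M *m x) i 0| <= (\sum_j `|M i j|) * sqrtC N.
  rewrite mxE; apply: le_trans (ler_norm_sum _ _ _) _; rewrite mulr_suml.
  by apply: ler_sum => j _; rewrite normrM ler_wpM2l ?normr_ge0 ?x_le.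
rewrite ctmx_mulmxE mulr_suml; apply: ler_sum => i _.
rewrite mulrC -normCK.
have -> : (\sum_j `|M i j|) ^+ 2 * N = ((\sum_j `|M i j|) * sqrtC N) ^+ 2.
  by rewrite exprMn sqrtCK.
by rewrite !expr2 ler_pM ?normr_ge0 ?Mx_le.
Qed.

Lemma vnorm_mulmx_bounded m n (M : 'M[C]_(m, n)) :
  exists2 K : R, 0 <= K & forall x, vnorm (M *m x) <= K * vnorm x.
Proof.
set K := \sum_i (\sum_j `|M i j|) ^+ 2.
have K0 : 0 <= K by rewrite sumr_ge0 // => i _; rewrite exprn_ge0 // sumr_ge0.
have KE : K = ((complex.Re K)%:C)%C by move/ger0_Im: K0; case: (K) => a b /= ->.
exists (Num.sqrt (complex.Re K)) => [|x]; first exact: sqrtr_ge0.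
rewrite /vnorm -sqrtrM ?Re_ge0 //; apply: ler_wsqrtr.
have := ctmx_mulmx_le M x; rewrite -/K KE lecE => /andP[_].
by rewrite Re_realM.
Qed.

End InnerProduct.

Section PositiveSemidefinite.
Variable R : rcfType.
Local Notation C := R[i].

Lemma quadratic_ge0_discr (a b c : R) :
  0 <= a -> (forall t, 0 <= c + 2 * b * t + a * t ^+ 2) -> b ^+ 2 <= a * c.
Proof.
move=> a0 q0; have [a_gt0|] := ltP 0 a.
  have := q0 (- b / a).
  have -> : c + 2 * b * (- b / a) + a * (- b / a) ^+ 2 = c - b ^+ 2 / a.
    by field; rewrite gt_eqF.
  by rewrite subr_ge0 ler_pdivrMr // mulrC.
move=> a_le0; have a_eq0 : a = 0 by apply/eqP; rewrite eq_le a_le0 a0.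
subst a; rewrite mul0r; have [->|b0] := eqVneq b 0; first by rewrite expr0n.
have := q0 (- (c + 1) / (2 * b)).
have -> : c + 2 * b * (- (c + 1) / (2 * b)) + 0 * (- (c + 1) / (2 * b)) ^+ 2 = -1.
  by rewrite mul0r addr0; field.
by rewrite oppr_ge0 ler10.
Qed.

Lemma hpsd_qform_ge0 n (P : 'M[C]_n) x : hpsd P -> 0 <= qform P x.
Proof. by case=> _ P0; apply/Re_ge0/P0. Qed.

Lemma rdot_hermC n (P : 'M[C]_n) a b : ctmx P = P -> rdot a (P *m b) = rdot b (P *m a).
Proof. by move=> hP; rewrite rdot_mulr hP rdotC. Qed.

Lemma cauchy_schwarz n (P : 'M[C]_n) a b : hpsd P ->
  rdot a (P *m b) ^+ 2 <= qform P a * qform P b.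
Proof.
move=> hP; rewrite mulrC; apply: quadratic_ge0_discr; first exact: hpsd_qform_ge0.
move=> t; have := hpsd_qform_ge0 (a + (t%:C)%C *: b) hP.
rewrite qformE mulmxDr !rdotDl !rdotDr -!scalemxAr !rdotZr !rdotZl.
by rewrite (rdot_hermC b a hP.1) -!qformE; nra.
Qed.

Lemma cauchy_schwarz_sqrt n (P : 'M[C]_n) a b : hpsd P ->
  rdot a (P *m b) <= Num.sqrt (qform P a) * Num.sqrt (qform P b).
Proof.
move=> hP; rewrite -sqrtrM ?hpsd_qform_ge0 //.
apply: le_trans (ler_norm _) _; rewrite -sqrtr_sqr; apply: ler_wsqrtr.
exact: cauchy_schwarz.
Qed.

Lemma hpsd1 n : hpsd (1%:M : 'M[C]_n).
Proof. by split=> [|x]; rewrite ?ctmx1 // mulmx1 ctmx_mulmx_ge0. Qed.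

Lemma rdot_le_vnorm n (a b : 'cV[C]_n) : rdot a b <= vnorm a * vnorm b.
Proof. by have := cauchy_schwarz_sqrt a b (hpsd1 n); rewrite !qformE !mul1mx. Qed.

Lemma sqrt_qformD_le n (P : 'M[C]_n) a b : hpsd P ->
  Num.sqrt (qform P (a + b)) <= Num.sqrt (qform P a) + Num.sqrt (qform P b).
Proof.
move=> hP; rewrite -[leRHS]ger0_norm ?addr_ge0 ?sqrtr_ge0 // -sqrtr_sqr.
apply: ler_wsqrtr; rewrite sqrrD !sqr_sqrtr ?hpsd_qform_ge0 //.
rewrite [qform P (a + b)]qformE mulmxDr !rdotDl !rdotDr (rdot_hermC b a hP.1) -!qformE.
by have := cauchy_schwarz_sqrt a b hP; lra.
Qed.

Lemma hpsd_qform_eq0 n (P : 'M[C]_n) x : hpsd P -> qform P x = 0 -> P *m x = 0.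
Proof.
move=> hP Px0; apply: rdot_eq0; have := cauchy_schwarz (P *m x) x hP.
rewrite Px0 mulr0 => h.
by apply/eqP; rewrite -sqrf_eq0 eq_le h sqr_ge0.
Qed.

Lemma hpsd_congr n (M S : 'M[C]_n) : hpsd S -> hpsd (ctmx M *m S *m M).
Proof.
case=> hS S0; split=> [|x]; first by rewrite !ctmx_mul ctmxK hS mulmxA.
have -> : ctmx x *m (ctmx M *m S *m M) *m x = ctmx (M *m x) *m S *m (M *m x).
  by rewrite ctmx_mul !mulmxA.
exact: S0.
Qed.

Lemma hpsd_inv n (S : 'M[C]_n) : hpsd S -> S \in unitmx -> hpsd (invmx S).
Proof.
move=> hS Su; have := hpsd_congr (invmx S) hS.
by rewrite ctmx_inv hS.1 mulmxK.
Qed.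

End PositiveSemidefinite.

Section SquareRoot.
Variable R : rcfType.
Local Notation C := R[i].

Lemma ctmx_delta_mx n (i : 'I_n) : ctmx (delta_mx i 0 : 'cV[C]_n) = delta_mx 0 i.
Proof. by apply/matrixP=> j k; rewrite !mxE andbC rmorph_nat. Qed.

Lemma delta_mx_formE n (M : 'M[C]_n) i :
  (ctmx (delta_mx i 0 : 'cV[C]_n) *m M *m (delta_mx i 0 : 'cV_n)) 0 0 = M i i.
Proof. by rewrite ctmx_delta_mx -rowE -colE !mxE. Qed.

Lemma mx_eq0_delta m n (M : 'M[C]_(m, n)) :
  (forall j, M *m (delta_mx j 0 : 'cV_n) = 0) -> M = 0.
Proof.
by move=> M0; apply/matrixP=> i j; move/matrixP/(_ i 0): (M0 j); rewrite -colE !mxE.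
Qed.

Lemma hpsd_diag_mx n (e : 'rV[C]_n) : (forall i, 0 <= e 0 i) -> hpsd (diag_mx e).
Proof.
move=> e0; split=> [|w].
  apply/matrixP=> i j; rewrite !mxE eq_sym.
  have [->|_] := eqVneq i j; last by rewrite !mulr0n rmorph0.
  by rewrite !mulr1n conj_Creal // ger0_real.
rewrite mul_mx_diag mxE sumr_ge0 // => j _; rewrite !mxE.
by rewrite mulrC mulrA mulr_ge0 // mul_conjC_ge0.
Qed.

Lemma psd_sqrt_exists n (X : 'M[C]_n) : hpsd X -> exists S, hpsd S /\ S *m S = X.
Proof.
move=> hX; have nX : X \is normalmx.
  have XtX : (X ^t Num.Def.conjC)%sesqui = X by rewrite -map_trmx; exact: hX.1.
  by apply/normalmxP; rewrite XtX.
have := orthomx_spectralP nX; set P := spectralmx X; set d := spectral_diag X.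
have uP : P \is unitarymx := spectral_unitarymx X.
have PPt : P *m ctmx P = 1%:M by rewrite /ctmx map_trmx; apply/unitarymxP.
have PtP : ctmx P *m P = 1%:M by rewrite mulmx1C.
rewrite invmx_unitary // -map_trmx -/(ctmx P) => eXd.
have d0 i : 0 <= d 0 i.
  have -> : d 0 i = (P *m X *m ctmx P) i i.
    by rewrite eXd !mulmxA PPt mul1mx -mulmxA PPt mulmx1 mxE eqxx mulr1n.
  rewrite -delta_mx_formE; set w := delta_mx i 0.
  have -> : ctmx w *m (P *m X *m ctmx P) *m w = ctmx (ctmx P *m w) *m X *m (ctmx P *m w).
    by rewrite ctmx_mul ctmxK !mulmxA.
  exact: hX.2.
pose e := \row_i sqrtC (d 0 i).
have e0 i : 0 <= e 0 i by rewrite mxE sqrtC_ge0.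
exists (ctmx P *m diag_mx e *m P); split; first exact/hpsd_congr/hpsd_diag_mx.
rewrite eXd -!mulmxA (mulmxA P) PPt mul1mx (mulmxA (diag_mx e)) mulmx_diag.
congr (_ *m (diag_mx _ *m _)); apply/rowP => j.
by rewrite !mxE -expr2 sqrtCK.
Qed.

Lemma Re_mxtrace_congr n (D X : 'M[C]_n) :
  complex.Re (\tr (ctmx D *m X *m D)) = \sum_i qform X (D *m delta_mx i 0).
Proof.
rewrite /mxtrace (big_morph (fun z : C => complex.Re z) (@ReD R) (erefl _)).
by apply: eq_bigr => i _; rewrite -delta_mx_formE qform_mulmx /qform !mulmxA.
Qed.

Lemma hpsd_mxtrace_congr_eq0 n (D X : 'M[C]_n) : hpsd X ->
  complex.Re (\tr (ctmx D *m X *m D)) = 0 -> X *m D = 0.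
Proof.
move=> hX; rewrite Re_mxtrace_congr => /eqP; rewrite psumr_eq0; last first.
  by move=> i _; exact: hpsd_qform_ge0.
move=> /allP qX0; apply: mx_eq0_delta => i; rewrite -mulmxA.
by apply: hpsd_qform_eq0 => //; apply/eqP/qX0/mem_index_enum.
Qed.

Lemma herm_sqr_eq0 n (D : 'M[C]_n) : ctmx D = D -> D *m D = 0 -> D = 0.
Proof.
move=> hD DD; apply: mx_eq0_delta => j; apply: rdot_eq0.
by rewrite rdot_mull hD mulmxA DD mul0mx rdot0r.
Qed.

Lemma psd_sqrt_unique n (S T : 'M[C]_n) : hpsd S -> hpsd T -> S *m S = T *m T -> S = T.
Proof.
(* D := S - T satisfies D S + T D = 0, so the two nonnegative traces of
   D S D and D T D add up to 0. *)
move=> hS hT eST; set D := S - T.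
have hD : ctmx D = D by rewrite /D ctmxD ctmxN hS.1 hT.1.
have DS_TD : D *m S + T *m D = 0.
  by rewrite /D mulmxBl mulmxBr eST addrA subrK subrr.
have tr0 : complex.Re (\tr (ctmx D *m S *m D)) + complex.Re (\tr (ctmx D *m T *m D)) = 0.
  rewrite hD [\tr (D *m S *m D)]mxtrace_mulC -ReD -mxtraceD -!mulmxA -mulmxDr.
  by rewrite DS_TD mulmx0 mxtrace0.
have ge0 X : hpsd X -> 0 <= complex.Re (\tr (ctmx D *m X *m D)).
  by move=> hX; rewrite Re_mxtrace_congr sumr_ge0 // => i _; exact: hpsd_qform_ge0.
move: tr0 => /eqP; rewrite paddr_eq0 ?ge0 // => /andP[/eqP trS0 /eqP trT0].
have SD0 := hpsd_mxtrace_congr_eq0 hS trS0.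
have TD0 := hpsd_mxtrace_congr_eq0 hT trT0.
apply/eqP; rewrite -subr_eq0; apply/eqP/herm_sqr_eq0 => //.
by rewrite mulmxBl SD0 TD0 subrr.
Qed.

Lemma psd_sqrtP n (X : 'M[C]_n) :
  hpsd X -> hpsd (psd_sqrt X) /\ psd_sqrt X *m psd_sqrt X = X.
Proof.
move=> /psd_sqrt_exists [S hS].
exact: (@xgetI _ 0 [set S | hpsd S /\ S *m S = X] S hS).
Qed.

End SquareRoot.

Section Suprema.
Local Open Scope classical_set_scope.
Variable R : realType.
Local Notation C := R[i].

(* [sup set0 = 0], hence the hypothesis [0 <= K]. *)
Lemma sup_le_nonneg (E : set R) K : 0 <= K -> (forall r, E r -> r <= K) -> sup E <= K.
Proof.
move=> K0 EK; have [E0|/set0P/negP/negPn/eqP->] := pselect (E !=set0).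
  exact: ge_sup.
by rewrite sup0.
Qed.

Lemma sup_ge0_nonneg (E : set R) K :
  (forall r, E r -> 0 <= r) -> (forall r, E r -> r <= K) -> 0 <= sup E.
Proof.
move=> E0 EK; have [[r Er]|/set0P/negP/negPn/eqP->] := pselect (E !=set0).
  by apply: le_trans (E0 r Er) (ub_le_sup _ Er); exists K.
by rewrite sup0.
Qed.

Lemma specnorm_ub n (M : 'M[C]_n) x : vnorm (M *m x) <= specnorm M * vnorm x.
Proof.
have [->|x0] := eqVneq x 0; first by rewrite mulmx0 vnorm0 mulr0.
have [K _ MK] := vnorm_mulmx_bounded M.
rewrite -ler_pdivrMr ?vnorm_gt0 //; apply: ub_le_sup; last by exists x.
by exists K => _ [y [y0 ->]]; rewrite ler_pdivrMr ?vnorm_gt0.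
Qed.

Lemma specnorm_le n (M : 'M[C]_n) K : 0 <= K ->
  (forall x, vnorm (M *m x) <= K * vnorm x) -> specnorm M <= K.
Proof.
by move=> K0 MK; apply: sup_le_nonneg => // _ [y [y0 ->]]; rewrite ler_pdivrMr ?vnorm_gt0.
Qed.

Lemma specnorm_ge0 n (M : 'M[C]_n) : 0 <= specnorm M.
Proof.
have [K _ MK] := vnorm_mulmx_bounded M; apply: (@sup_ge0_nonneg _ K).
  by move=> _ [y [y0 ->]]; rewrite divr_ge0 ?vnorm_ge0.
by move=> _ [y [y0 ->]]; rewrite ler_pdivrMr ?vnorm_gt0.
Qed.

Section Rayleigh.
Variables (n : nat) (M S : 'M[C]_n).
Hypothesis S_pos : forall x, x != 0 -> 0 < qform S x.
Hypothesis M_bounded : exists K, forall x, qform M x <= K * qform S x.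

Lemma rayleigh_ub x : qform M x <= rayleigh_sup M S * qform S x.
Proof.
have [K MK] := M_bounded; have [->|x0] := eqVneq x 0.
  by rewrite !qformE !mulmx0 !rdot0r mulr0.
rewrite -ler_pdivrMr ?S_pos //; apply: ub_le_sup; last by exists x.
by exists K => _ [y [y0 ->]]; rewrite ler_pdivrMr ?S_pos ?MK.
Qed.

Lemma rayleigh_ge0 : (forall x, 0 <= qform M x) -> 0 <= rayleigh_sup M S.
Proof.
move=> M0; have [K MK] := M_bounded; apply: (@sup_ge0_nonneg _ K).
  by move=> _ [y [y0 ->]]; rewrite divr_ge0 // ltW ?S_pos.
by move=> _ [y [y0 ->]]; rewrite ler_pdivrMr ?S_pos ?MK.
Qed.

End Rayleigh.
End Suprema.

Section RealInequality.
Variable R : rcfType.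

Lemma le_mul_of_le_sqrt (r t b : R) : 0 <= r -> 0 <= t -> 0 <= b ->
  r <= Num.sqrt t * Num.sqrt (b * r) -> r <= b * t.
Proof.
move=> r0 t0 b0; rewrite -sqrtrM ?mulr_ge0 // => r_le.
have r2 : r * r <= t * (b * r).
  by rewrite -[t * _]sqr_sqrtr ?mulr_ge0 // expr2 ler_pM.
have [->|r_gt0] := eqVneq r 0; first by rewrite mulr_ge0.
by rewrite -(ler_pM2r (x := r)) ?lt_def ?r_gt0 //; lra.
Qed.

Lemma norm2_le_of_le_dot (p q X Y m : R) :
  0 <= p -> 0 <= q -> 0 <= X -> 0 <= Y -> 0 <= m ->
  X ^+ 2 + Y ^+ 2 <= m * (Y * p + X * q) -> X ^+ 2 + Y ^+ 2 <= m ^+ 2 * (p ^+ 2 + q ^+ 2).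
Proof.
move=> p0 q0 X0 Y0 m0 XY_W; set N := p ^+ 2 + q ^+ 2; set W := Y * p + X * q in XY_W.
have W0 : 0 <= W by rewrite addr_ge0 ?mulr_ge0.
have W_XY : W ^+ 2 <= (X ^+ 2 + Y ^+ 2) * N.
  by have := sqr_ge0 (Y * q - X * p); rewrite /W /N; nra.
have W_N : W <= m * N.
  have : W * W <= W * (m * N).
    have : (X ^+ 2 + Y ^+ 2) * N <= m * W * N by rewrite ler_wpM2r ?addr_ge0 ?sqr_ge0.
    by move: W_XY; rewrite expr2; lra.
  have [->|W_gt0] := eqVneq W 0; first by rewrite mulr_ge0 ?addr_ge0 ?sqr_ge0.
  by rewrite ler_pM2l // lt_def W_gt0.
by apply: le_trans XY_W _; rewrite expr2 -mulrA ler_wpM2l.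
Qed.

Lemma block_real_bound (p q X Y s t a g : R) :
  0 <= p -> 0 <= q -> 0 <= X -> 0 <= Y -> 0 <= s -> 0 <= t -> 0 <= a -> 0 <= g ->
  s <= q + Num.sqrt g * Y -> t <= p + Num.sqrt a * X ->
  X ^+ 2 + Y ^+ 2 <= Y * (Num.sqrt g * p) + X * (Num.sqrt a * q) ->
  s ^+ 2 + t ^+ 2 <= (1 + Num.max a g) ^+ 2 * (p ^+ 2 + q ^+ 2).
Proof.
move=> p0 q0 X0 Y0 s0 t0 a0 g0 hs ht hXY.
pose m : R := Num.sqrt (Num.max a g); set N := p ^+ 2 + q ^+ 2.
set V := q * Y + p * X.
have m0 : 0 <= m := sqrtr_ge0 _.
have mm : m ^+ 2 = Num.max a g by rewrite sqr_sqrtr // le_max a0.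
have am : Num.sqrt a <= m by rewrite ler_wsqrtr // le_max lexx.
have gm : Num.sqrt g <= m by rewrite ler_wsqrtr // le_max lexx orbT.
have sa0 := sqrtr_ge0 a; have sg0 := sqrtr_ge0 g.
have XY_N : X ^+ 2 + Y ^+ 2 <= m ^+ 2 * N.
  apply: norm2_le_of_le_dot => //.
  have : Y * (Num.sqrt g * p) <= Y * (m * p) by rewrite ler_wpM2l ?ler_wpM2r.
  have : X * (Num.sqrt a * q) <= X * (m * q) by rewrite ler_wpM2l ?ler_wpM2r.
  nra.
have V_N : V <= m * N.
  have V_XY : V ^+ 2 <= (X ^+ 2 + Y ^+ 2) * N.
    by have := sqr_ge0 (q * X - p * Y); rewrite /V /N; nra.
  have mN0 : 0 <= m * N by rewrite mulr_ge0 ?addr_ge0 ?sqr_ge0.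
  have V0 : 0 <= V by rewrite addr_ge0 ?mulr_ge0.
  have : V ^+ 2 <= (m * N) ^+ 2.
    apply: le_trans V_XY _; rewrite exprMn [N ^+ 2]expr2 mulrA.
    by apply: ler_wpM2r XY_N; rewrite addr_ge0 ?sqr_ge0.
  by rewrite ler_sqr ?nnegrE.
have s2 : s ^+ 2 <= (q + m * Y) ^+ 2.
  by rewrite ler_sqr ?nnegrE ?addr_ge0 ?mulr_ge0 //; apply: le_trans hs _; rewrite lerD2l ler_wpM2r.
have t2 : t ^+ 2 <= (p + m * X) ^+ 2.
  by rewrite ler_sqr ?nnegrE ?addr_ge0 ?mulr_ge0 //; apply: le_trans ht _; rewrite lerD2l ler_wpM2r.
have -> : (1 + Num.max a g) ^+ 2 * N = N + 2 * m * (m * N) + m ^+ 2 * (m ^+ 2 * N).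
  by rewrite -[Num.max a g]mm; ring.
have : (q + m * Y) ^+ 2 + (p + m * X) ^+ 2 = N + 2 * m * V + m ^+ 2 * (X ^+ 2 + Y ^+ 2).
  by rewrite /N /V; ring.
have : 2 * m * V <= 2 * m * (m * N) by rewrite ler_wpM2l ?mulr_ge0.
have : m ^+ 2 * (X ^+ 2 + Y ^+ 2) <= m ^+ 2 * (m ^+ 2 * N) by rewrite ler_wpM2l ?sqr_ge0.
lra.
Qed.

End RealInequality.

Section Domination.
Variable R : rcfType.
Local Notation C := R[i].

Lemma invmx_mulmx1 n (M N : 'M[C]_n) : M *m N = 1%:M -> invmx M = N.
Proof.
by move=> MN; have [Mu _] := mulmx1_unit MN; rewrite -[LHS]mulmx1 -MN mulKmx.
Qed.

Lemma sqr_unitmx n (S M : 'M[C]_n) : S *m S = M -> M \in unitmx -> S \in unitmx.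
Proof. by move=> <-; rewrite unitmx_mul => /andP[]. Qed.

Lemma hpsd_mulmx_ctmx n (M : 'M[C]_n) : hpsd (M *m ctmx M).
Proof. by have := hpsd_congr (ctmx M) (hpsd1 _ n); rewrite ctmxK mulmx1. Qed.

Lemma hpsd_qform_gt0 n (S : 'M[C]_n) x : hpsd S -> S \in unitmx -> x != 0 -> 0 < qform S x.
Proof.
move=> hS Su x0; rewrite lt_def hpsd_qform_ge0 // andbT.
apply: contra x0 => /eqP/(hpsd_qform_eq0 hS) Sx0.
by rewrite -(mulKmx Su x) Sx0 mulmx0.
Qed.

Lemma qform_invmx n (S : 'M[C]_n) x :
  S \in unitmx -> qform S (invmx S *m x) = qform (invmx S) x.
Proof. by move=> Su; rewrite !qformE mulKVmx // rdotC. Qed.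

Lemma qform_inv_le_vnorm n (S : 'M[C]_n) be :
  (forall z, vnorm (invmx S *m z) <= be * vnorm z) ->
  forall x, qform (invmx S) x <= be * vnorm x ^+ 2.
Proof.
move=> Sbe x; rewrite qformE; apply: le_trans (rdot_le_vnorm _ _) _.
by rewrite mulrC expr2 mulrA ler_wpM2r ?vnorm_ge0.
Qed.

Lemma vnorm_le_qform n (S : 'M[C]_n) be : hpsd S -> S \in unitmx -> 0 <= be ->
  (forall z, vnorm (invmx S *m z) <= be * vnorm z) ->
  forall x, vnorm x ^+ 2 <= be * qform S x.
Proof.
move=> hS Su be0 Sbe x.
apply: le_mul_of_le_sqrt; rewrite ?sqr_ge0 ?hpsd_qform_ge0 //.
have := cauchy_schwarz_sqrt x (invmx S *m x) hS.
rewrite mulKVmx // -vnorm_sqr => /le_trans; apply.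
rewrite ler_wpM2l ?sqrtr_ge0 // ler_wsqrtr // qform_invmx //.
exact: qform_inv_le_vnorm.
Qed.

Lemma qform_dominated n (M S : 'M[C]_n) be :
  (forall x, vnorm x ^+ 2 <= be * qform S x) ->
  exists K, forall x, qform M x <= K * qform S x.
Proof.
have [K K0 MK] := vnorm_mulmx_bounded M.
move=> Sbe; exists (K * be) => x; rewrite qformE rdotC.
apply: le_trans (rdot_le_vnorm _ _) _.
apply: le_trans (_ : K * vnorm x ^+ 2 <= _); last by rewrite -mulrA ler_wpM2l.
by rewrite expr2 mulrA ler_wpM2r ?vnorm_ge0.
Qed.

Section KernelDomination.
Variables (n : nat) (K P : 'M[C]_n) (g : R).
Hypotheses (hK : hpsd K) (hP : hpsd P) (g0 : 0 <= g).
Hypothesis KP : forall z, qform K z <= g * qform P z.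

Lemma rdot_le_dominated y z :
  rdot y (K *m z) <= Num.sqrt (qform K y) * (Num.sqrt g * Num.sqrt (qform P z)).
Proof.
apply: le_trans (cauchy_schwarz_sqrt y z hK) _.
by rewrite -[Num.sqrt g * _]sqrtrM // ler_wpM2l ?sqrtr_ge0 // ler_wsqrtr.
Qed.

Hypothesis Pu : P \in unitmx.

Lemma qform_inv_dominated y : qform (invmx P) (K *m y) <= g * qform K y.
Proof.
set k := invmx P *m (K *m y); set Q := qform (invmx P) (K *m y).
have Q0 : 0 <= Q by apply/hpsd_qform_ge0/hpsd_inv.
have Qk : qform P k = Q by rewrite /Q !qformE /k mulKVmx // rdotC.
have QK : Q = rdot y (K *m k) by rewrite /Q qformE rdot_mull hK.1.
have QQ : Q * Q <= qform K y * (g * Q).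
  rewrite -expr2 {1}QK; apply: le_trans (cauchy_schwarz y k hK) _.
  by rewrite ler_wpM2l ?hpsd_qform_ge0 // -Qk.
have [->|Q_gt0] := eqVneq Q 0; first by rewrite mulr_ge0 ?hpsd_qform_ge0.
rewrite -(ler_pM2r (x := Q)) ?lt_def ?Q_gt0 //.
by rewrite [g * _]mulrC -mulrA.
Qed.

Lemma sqrt_qform_inv_addr_le v y :
  Num.sqrt (qform (invmx P) (v + K *m y)) <=
  Num.sqrt (qform (invmx P) v) + Num.sqrt g * Num.sqrt (qform K y).
Proof.
apply: le_trans (sqrt_qformD_le _ _ (hpsd_inv hP Pu)) _.
by rewrite lerD2l -sqrtrM // ler_wsqrtr // qform_inv_dominated.
Qed.

End KernelDomination.
End Domination.

Section PolarFactor.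
Variables (R : rcfType) (n : nat) (B S T : 'M[R[i]]_n) (be : R).
Hypotheses (Bu : B \in unitmx) (hS : hpsd S) (hT : hpsd T).
Hypotheses (SS : S *m S = B *m ctmx B) (TT : T *m T = ctmx B *m B).
Hypotheses (be0 : 0 <= be) (Bbe : forall z, vnorm (invmx B *m z) <= be * vnorm z).

Lemma unitmx_sqrt_BBt : S \in unitmx.
Proof. by apply: sqr_unitmx SS _; rewrite unitmx_mul ctmx_unit Bu. Qed.

Lemma unitmx_sqrt_BtB : T \in unitmx.
Proof. by apply: sqr_unitmx TT _; rewrite unitmx_mul ctmx_unit Bu. Qed.

(* The unitary factor of the polar decomposition B = S U; then T = U^* S U. *)
Let U : 'M[R[i]]_n := invmx S *m B.

Lemma polar_unitaryr : U *m ctmx U = 1%:M.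
Proof.
rewrite /U; have Su := unitmx_sqrt_BBt.
by rewrite ctmx_mul ctmx_inv hS.1 -mulmxA (mulmxA B) -SS mulmxK // mulVmx.
Qed.

Lemma polar_unitaryl : ctmx U *m U = 1%:M.
Proof. exact/mulmx1C/polar_unitaryr. Qed.

Lemma polar_mulmx : B = S *m U.
Proof. by rewrite /U mulKVmx // unitmx_sqrt_BBt. Qed.

Lemma polar_invmx : invmx B = ctmx U *m invmx S.
Proof.
apply: invmx_mulmx1; rewrite {1}polar_mulmx -mulmxA (mulmxA U) polar_unitaryr mul1mx.
by rewrite mulmxV // unitmx_sqrt_BBt.
Qed.

Lemma polar_sqrt_BtB : T = ctmx U *m S *m U.
Proof.
apply: psd_sqrt_unique => //; first exact: hpsd_congr.
rewrite unitary_conjM ?polar_unitaryr //.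
have -> : ctmx U *m (S *m S) *m U = ctmx B *m (U *m ctmx U) *m B.
  by rewrite SS ctmx_mul ctmx_inv hS.1 !mulmxA.
by rewrite polar_unitaryr mulmx1 TT.
Qed.

Lemma polar_invmx_sqrt_BtB : invmx T = ctmx U *m invmx S *m U.
Proof.
have Su := unitmx_sqrt_BBt.
apply: invmx_mulmx1; rewrite polar_sqrt_BtB unitary_conjM ?polar_unitaryr //.
by rewrite mulmxV // mulmx1 polar_unitaryl.
Qed.

Lemma vnorm_invmx_sqrt_BBt z : vnorm (invmx S *m z) <= be * vnorm z.
Proof.
have -> : invmx S = U *m invmx B by rewrite -mulmxA mulmxV // mulmx1.
by rewrite -mulmxA vnorm_unitary ?polar_unitaryl.
Qed.

Lemma vnorm_invmx_sqrt_BtB z : vnorm (invmx T *m z) <= be * vnorm z.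
Proof.
have UUt : ctmx (ctmx U) *m ctmx U = 1%:M by rewrite ctmxK polar_unitaryr.
have -> : invmx T *m z = ctmx U *m (invmx S *m (U *m z)).
  by rewrite polar_invmx_sqrt_BtB !mulmxA.
rewrite vnorm_unitary // -(vnorm_unitary z polar_unitaryl).
exact: vnorm_invmx_sqrt_BBt.
Qed.

Lemma qform_sqrt_BtB_invmx w : qform T (invmx B *m w) = qform (invmx S) w.
Proof.
rewrite polar_invmx polar_sqrt_BtB -qform_mulmx !mulmxA polar_unitaryr mul1mx.
exact/qform_invmx/unitmx_sqrt_BBt.
Qed.

Lemma qform_sqrt_BBt_ctmx_invmx w : qform S (ctmx (invmx B) *m w) = qform (invmx T) w.
Proof.
rewrite polar_invmx polar_invmx_sqrt_BtB ctmx_mul ctmx_inv ctmxK hS.1 -mulmxA.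
by rewrite qform_invmx ?unitmx_sqrt_BBt // -qform_mulmx.
Qed.

Section BlockMatrix.
Variables (A C : 'M[R[i]]_n) (al ga : R).
Hypotheses (hA : hpsd A) (hC : hpsd C) (al0 : 0 <= al) (ga0 : 0 <= ga).
Hypotheses (AS : forall z, qform A z <= al * qform S z).
Hypotheses (CT : forall z, qform C z <= ga * qform T z).

Section BlockVector.
Variables x y : 'cV[R[i]]_n.
Local Notation u := (A *m x + B *m y).
Local Notation v := (ctmx B *m x - C *m y).

Lemma block_energy_identity :
  qform A x + qform C y =
  rdot y (C *m (invmx B *m u)) + rdot x (A *m (ctmx (invmx B) *m v)).
Proof.
have xE : x = ctmx (invmx B) *m (v + C *m y).
  by rewrite subrK ctmx_inv mulKmx // ctmx_unit.
have yE : y = invmx B *m (u - A *m x) by rewrite addrC addKr mulKmx.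
set p := rdot u (ctmx (invmx B) *m v); set q := rdot y (C *m _).
set s := rdot x (A *m _); set t := rdot x (B *m y).
have xu : rdot x u = p + q.
  by rewrite {1}xE rdot_mull ctmxK rdotDl rdot_mull hC.1 rdotC rdot_mull.
have yv : rdot y v = p - s.
  by rewrite {1}yE rdot_mull rdotDl rdotNl rdot_mull hA.1.
have xu' : rdot x u = qform A x + t by rewrite rdotDr qformE.
have yv' : rdot y v = t - qform C y.
  by rewrite rdotDr rdotNr rdot_mulr ctmxK [rdot (B *m y) x]rdotC qformE.
move: xu yv xu' yv'; clearbody p q s t; clear xE yE.
move: (rdot x u) (rdot y v) (qform A x) (qform C y) => a b X Y; lra.
Qed.

Lemma block_energy_le :
  qform A x + qform C y <=
  Num.sqrt (qform C y) * (Num.sqrt ga * Num.sqrt (qform (invmx S) u)) +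
  Num.sqrt (qform A x) * (Num.sqrt al * Num.sqrt (qform (invmx T) v)).
Proof.
rewrite block_energy_identity -qform_sqrt_BtB_invmx -qform_sqrt_BBt_ctmx_invmx.
exact: lerD (rdot_le_dominated hC ga0 CT _ _) (rdot_le_dominated hA al0 AS _ _).
Qed.

Lemma sqrt_qform_sqrt_BBt_le :
  Num.sqrt (qform S x) <=
  Num.sqrt (qform (invmx T) v) + Num.sqrt ga * Num.sqrt (qform C y).
Proof.
have xE : x = ctmx (invmx B) *m (v + C *m y).
  by rewrite subrK ctmx_inv mulKmx // ctmx_unit.
rewrite {1}xE qform_sqrt_BBt_ctmx_invmx.
exact: (sqrt_qform_inv_addr_le hC hT ga0 CT unitmx_sqrt_BtB).
Qed.

Lemma sqrt_qform_sqrt_BtB_le :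
  Num.sqrt (qform T y) <=
  Num.sqrt (qform (invmx S) u) + Num.sqrt al * Num.sqrt (qform A x).
Proof.
have yE : y = invmx B *m (u + A *m (- x)) by rewrite mulmxN addrC addKr mulKmx.
rewrite {1}yE qform_sqrt_BtB_invmx -(qformN A x).
exact: (sqrt_qform_inv_addr_le hA hS al0 AS unitmx_sqrt_BBt).
Qed.

Lemma block_vnorm_sqr_le :
  vnorm x ^+ 2 + vnorm y ^+ 2 <=
  (be * (1 + Num.max al ga)) ^+ 2 * (vnorm u ^+ 2 + vnorm v ^+ 2).
Proof.
have Su := unitmx_sqrt_BBt; have Tu := unitmx_sqrt_BtB.
have sqrE M z : hpsd M -> Num.sqrt (qform M z) ^+ 2 = qform M z.
  by move=> hM; rewrite sqr_sqrtr ?hpsd_qform_ge0.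
have iS := hpsd_inv hS Su; have iT := hpsd_inv hT Tu.
have st := block_real_bound (sqrtr_ge0 (qform (invmx S) u)) (sqrtr_ge0 (qform (invmx T) v))
  (sqrtr_ge0 (qform A x)) (sqrtr_ge0 (qform C y)) (sqrtr_ge0 (qform S x))
  (sqrtr_ge0 (qform T y)) al0 ga0 sqrt_qform_sqrt_BBt_le sqrt_qform_sqrt_BtB_le.
rewrite !sqrE // in st; have {}st := st block_energy_le.
set M := (1 + Num.max al ga) ^+ 2 in st *.
have Sx := vnorm_le_qform hS Su be0 vnorm_invmx_sqrt_BBt x.
have Ty := vnorm_le_qform hT Tu be0 vnorm_invmx_sqrt_BtB y.
have Su_le := qform_inv_le_vnorm vnorm_invmx_sqrt_BBt u.
have Tv_le := qform_inv_le_vnorm vnorm_invmx_sqrt_BtB v.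
apply: le_trans (_ : be * (qform S x + qform T y) <= _).
  by rewrite mulrDr; exact: lerD Sx Ty.
have M0 : 0 <= M := sqr_ge0 _.
have uv_le : qform (invmx S) u + qform (invmx T) v <= be * (vnorm u ^+ 2 + vnorm v ^+ 2).
  by rewrite mulrDr; exact: lerD Su_le Tv_le.
apply: le_trans (ler_wpM2l be0 st) _.
apply: le_trans (ler_wpM2l be0 (ler_wpM2l M0 uv_le)) _.
rewrite exprMn -/M; clearbody M.
suff -> : be ^+ 2 * M * (vnorm u ^+ 2 + vnorm v ^+ 2) =
  be * (M * (be * (vnorm u ^+ 2 + vnorm v ^+ 2))) by [].
by ring.
Qed.

End BlockVector.

Lemma block_vnorm_le w :
  vnorm w <= be * (1 + Num.max al ga) * vnorm (block_mx A B (ctmx B) (- C) *m w).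
Proof.
have K0 : 0 <= be * (1 + Num.max al ga) by rewrite mulr_ge0 // addr_ge0 // le_max al0.
rewrite -(vsubmxK w) mul_block_col mulNmx.
move: (block_vnorm_sqr_le (usubmx w) (dsubmx w)).
by rewrite -!vnorm_col -exprMn ler_sqr ?nnegrE ?(mulr_ge0 K0) ?vnorm_ge0.
Qed.

End BlockMatrix.
End PolarFactor.

Section Invertibility.
Variable R : realType.
Local Notation C := R[i].

Lemma rayleigh_sup_dominated n (M S : 'M[C]_n) be :
  hpsd M -> hpsd S -> S \in unitmx -> (forall x, vnorm x ^+ 2 <= be * qform S x) ->
  0 <= rayleigh_sup M S /\ forall x, qform M x <= rayleigh_sup M S * qform S x.
Proof.
move=> hM hS Su Sbe; have S_pos x : x != 0 -> 0 < qform S x by exact: hpsd_qform_gt0.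
have M_bounded := qform_dominated M Sbe.
split; [apply: rayleigh_ge0 => // x | exact: rayleigh_ub]; exact: hpsd_qform_ge0.
Qed.

Lemma unitmx_of_vnorm_lower n (H : 'M[C]_n) K :
  (forall w, vnorm w <= K * vnorm (H *m w)) -> H \in unitmx.
Proof.
move=> HK; rewrite -unitmx_tr unitmxE unitfE; apply/negP => /det0P[v v0 vH].
have : vnorm v^T <= 0.
  by have := HK v^T; rewrite -[H]trmxK -trmx_mul vH trmx0 vnorm0 mulr0.
by rewrite leNgt vnorm_gt0 // trmx_eq0.
Qed.

Lemma specnorm_invmx_le n (H : 'M[C]_n) K : 0 <= K ->
  (forall w, vnorm w <= K * vnorm (H *m w)) -> specnorm (invmx H) <= K.
Proof.
move=> K0 HK; apply: specnorm_le => // z.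
by have := HK (invmx H *m z); rewrite mulKVmx // (unitmx_of_vnorm_lower HK).
Qed.

End Invertibility.

Theorem theorem3p3 (R : realType) (n : nat) (A B C : 'M[R[i]]_n) :
  hpsd A -> hpsd C -> B \in unitmx ->
  let H : 'M[R[i]]_(n + n) := block_mx A B (ctmx B) (- C) in
  let alpha := rayleigh_sup A (psd_sqrt (B *m ctmx B)) in
  let gamma := rayleigh_sup C (psd_sqrt (ctmx B *m B)) in
  H \in unitmx /\
  specnorm (invmx H) <= specnorm (invmx B) * (1 + Num.max alpha gamma + alpha * gamma).
Proof.
move=> hA hC Bu; cbv zeta.
have [hS SS] := psd_sqrtP (hpsd_mulmx_ctmx B).
have [hT TT] := psd_sqrtP (hpsd_mulmx_ctmx (ctmx B)); rewrite ctmxK in hT TT.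
move: (psd_sqrt (B *m ctmx B)) (psd_sqrt (ctmx B *m B)) hS SS hT TT.
move=> S T hS SS hT TT.
have be0 := specnorm_ge0 (invmx B); have Bbe := specnorm_ub (invmx B).
have Su := unitmx_sqrt_BBt Bu SS; have Tu := unitmx_sqrt_BtB Bu TT.
have [al0 AS] := rayleigh_sup_dominated hA hS Su
  (vnorm_le_qform hS Su be0 (vnorm_invmx_sqrt_BBt Bu hS SS Bbe)).
have [ga0 CT] := rayleigh_sup_dominated hC hT Tu
  (vnorm_le_qform hT Tu be0 (vnorm_invmx_sqrt_BtB Bu hS hT SS TT Bbe)).
move: (rayleigh_sup A S) (rayleigh_sup C T) al0 ga0 AS CT => al ga al0 ga0 AS CT.
have HK := block_vnorm_le Bu hS hT SS TT be0 Bbe hA hC al0 ga0 AS CT.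
have m0 : 0 <= Num.max al ga by rewrite le_max al0.
have K0 := mulr_ge0 be0 (addr_ge0 ler01 m0).
split; first exact: unitmx_of_vnorm_lower HK.
apply: le_trans (specnorm_invmx_le K0 HK) _.
by rewrite ler_wpM2l // lerDl mulr_ge0.
Qed.
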